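(* Let $I(\emptyset)$ denote the quiver with no vertices and no edges, and let $C$ be a quiver. A quiver homomorphism $\varphi : I(\emptyset) \to C$ is mono-essential if and only if $|V(C)|\le 1$ and $|E(C)|\le 1$.
   Context: A quiver is a quadruple $(V,E,\sigma,\tau)$ with $V,E$ sets and $\sigma,\tau : E \to V$ functions. A quiver homomorphism $G \to H$ is a pair $(\phi_V,\phi_E)$ of functions on vertices and edges commuting with sources and targets; composition is componentwise. A quiver homomorphism is a monomorphism (monic) in the category $\mathbf{Quiv}$ if and only if both its vertex and edge maps are injective. A monic homomorphism $\varphi : A \to B$ is mono-essential if for every quiver $C'$ and homomorphism $\alpha : B \to C'$, if $\alpha\circ\varphi$ is monic then $\alpha$ is monic. *)

Record quiver : Type := Quiver {
  qV : Type;
  qE : Type;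
  qsrc : qE -> qV;
  qtgt : qE -> qV
}.

Record qhom (G H : quiver) : Type := QHom {
  hV : qV G -> qV H;
  hE : qE G -> qE H;
  hsrc : forall e, hV (qsrc G e) = qsrc H (hE e);
  htgt : forall e, hV (qtgt G e) = qtgt H (hE e)
}.
Arguments hV {G H} _ _.
Arguments hE {G H} _ _.

Definition qcomp {A B C : quiver} (g : qhom B C) (f : qhom A B) : qhom A C.
Proof.
  refine (QHom A C (fun v => hV g (hV f v)) (fun e => hE g (hE f e)) _ _).
  - intro e; rewrite (hsrc _ _ f), (hsrc _ _ g); reflexivity.
  - intro e; rewrite (htgt _ _ f), (htgt _ _ g); reflexivity.
Defined.

Definition qhom_eq {A B : quiver} (f g : qhom A B) : Prop :=
  (forall v, hV f v = hV g v) /\ (forall e, hE f e = hE g e).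

Definition monic {A B : quiver} (f : qhom A B) : Prop :=
  forall (Z : quiver) (g h : qhom Z A),
    qhom_eq (qcomp f g) (qcomp f h) -> qhom_eq g h.

Definition mono_essential {A B : quiver} (phi : qhom A B) : Prop :=
  monic phi /\
  forall (C' : quiver) (alpha : qhom B C'), monic (qcomp alpha phi) -> monic alpha.

Definition I_empty : quiver :=
  Quiver Empty_set Empty_set (fun e => e) (fun e => e).

Definition card_le1 (X : Type) : Prop := forall x y : X, x = y.

(** Every homomorphism out of the empty quiver is monic, and so is every
    composite with it; hence [phi : I(emptyset) -> C] is mono-essential
    exactly when every homomorphism out of [C] is monic.  If [C] has at most
    one vertex and one edge, any two homomorphisms into [C] agree, so all of
    them are monic.  Conversely, the map from [C] to the terminal quiver (one
    loop on one vertex) must then be monic; testing it against the one-vertex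
    quiver and the one-arrow quiver separates any two vertices, resp. edges,
    of [C]. *)

From Stdlib Require Import ssreflect ssrfun.

Lemma qhom_eq_into_subsingleton (Z C : quiver) (g h : qhom Z C) :
  card_le1 (qV C) -> card_le1 (qE C) -> qhom_eq g h.
Proof. by move=> HV HE; split=> x; [apply: HV | apply: HE]. Qed.

Lemma monic_from_empty (B : quiver) (f : qhom I_empty B) : monic f.
Proof. by move=> Z g h _; split=> x; [case: (hV g x) | case: (hE g x)]. Qed.

Lemma mono_essential_from_emptyE (C : quiver) (phi : qhom I_empty C) :
  mono_essential phi <->
  forall (C' : quiver) (alpha : qhom C C'), monic alpha.
Proof.
split=> [[_ Hess] C' alpha | Hall].
- by apply: Hess; exact: monic_from_empty.
- by split=> [|C' alpha _]; [exact: monic_from_empty | exact: Hall].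
Qed.

Definition terminal_quiver : quiver :=
  Quiver unit unit (fun _ => tt) (fun _ => tt).

Definition to_terminal (C : quiver) : qhom C terminal_quiver :=
  QHom C terminal_quiver (fun _ => tt) (fun _ => tt)
    (fun _ => erefl) (fun _ => erefl).

Definition vertex_quiver : quiver :=
  Quiver unit Empty_set (fun e => match e with end) (fun e => match e with end).

Definition vertex_qhom (C : quiver) (x : qV C) : qhom vertex_quiver C :=
  QHom vertex_quiver C (fun _ => x) (fun e => match e with end)
    (fun e => match e with end) (fun e => match e with end).

Definition arrow_quiver : quiver :=
  Quiver bool unit (fun _ => false) (fun _ => true).

Definition arrow_qhom (C : quiver) (e : qE C) : qhom arrow_quiver C :=
  QHom arrow_quiver C (fun b => if b then qtgt C e else qsrc C e) (fun _ => e)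
    (fun _ => erefl) (fun _ => erefl).

Lemma card_le1_vertices_of_monic_to_terminal (C : quiver) :
  monic (to_terminal C) -> card_le1 (qV C).
Proof.
move=> Hmono x y.
have [Heq _] : qhom_eq (vertex_qhom C x) (vertex_qhom C y).
  by apply: Hmono; split=> -[].
exact: Heq tt.
Qed.

Lemma card_le1_edges_of_monic_to_terminal (C : quiver) :
  monic (to_terminal C) -> card_le1 (qE C).
Proof.
move=> Hmono e e'.
have [_ Heq] : qhom_eq (arrow_qhom C e) (arrow_qhom C e').
  by apply: Hmono; split=> -[].
exact: Heq tt.
Qed.

Theorem mainTheorem3 (C : quiver) (phi : qhom I_empty C) :
  mono_essential phi <-> (card_le1 (qV C) /\ card_le1 (qE C)).
Proof.
split=> [/mono_essential_from_emptyE Hall | [HV HE]].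
- have Hterm := Hall _ (to_terminal C).
  split.
  + exact: card_le1_vertices_of_monic_to_terminal.
  + exact: card_le1_edges_of_monic_to_terminal.
- apply/mono_essential_from_emptyE => C' alpha Z g h _.
  exact: qhom_eq_into_subsingleton.
Qed.
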